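(* Let $(H,A,C)$ be a Doi-Hopf datum with $H$ a Hopf algebra, and let $\nu:GF\to 1_{\mathcal C}$ be a natural transformation. Then for every Doi-Hopf module $M$, every $m\in M$ and $c\in C$, $$\nu_M(c\otimes m)=\sum m_{<0>}\cdot\Big((\varepsilon_C\otimes I_A)\,\nu_{C\otimes A}(c\otimes m_{<-1>}\otimes 1_A)\Big).$$ In particular $\nu$ is completely determined by $\nu_{C\otimes A}:C\otimes C\otimes A\to C\otimes A$.
   Context: $k$ is a commutative ring; all (co)algebras, tensor products and maps are over $k$. Sweedler notation: $\Delta(c)=\sum c_{(1)}\otimes c_{(2)}$; for a left comodule, $\rho(m)=\sum m_{<-1>}\otimes m_{<0>}$. A Doi-Hopf datum $(H,A,C)$: $H$ a bialgebra, $A$ a left $H$-comodule algebra (coaction $\rho_A$ an algebra map), $C$ a right $H$-module coalgebra ($\Delta(c\cdot h)=\sum c_{(1)}\cdot h_{(1)}\otimes c_{(2)}\cdot h_{(2)}$, $\varepsilon(c\cdot h)=\varepsilon(c)\varepsilon(h)$), $C$ flat over $k$. A Doi-Hopf module is a right $A$-module $M$ with left $C$-coaction $\rho_M$ such that $\rho_M(ma)=\sum m_{<-1>}\cdot a_{<-1>}\otimes m_{<0>}a_{<0>}$; $\mathcal C={}^C\mathcal M(H)_A$ is their category with $A$-linear $C$-colinear maps. $F:\mathcal C\to\mathcal M_A$ forgets the coaction; its right adjoint is $G(N)=C\otimes N$ with $(c\otimes n)a=\sum c\cdot a_{<-1>}\otimes na_{<0>}$ and $\rho(c\otimes n)=\sum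 c_{(1)}\otimes c_{(2)}\otimes n$; so $GF(M)=C\otimes M$ and a natural transformation $\nu:GF\to 1_{\mathcal C}$ is a family of morphisms $\nu_M:C\otimes M\to M$ in $\mathcal C$, natural in $M$. *)

From HB Require Import structures.
From mathcomp Require Import all_boot all_algebra.
From mathcomp Require Import boolp.
Set Implicit Arguments. Unset Strict Implicit. Unset Printing Implicit Defensive.
Import GRing.Theory.
Local Open Scope ring_scope.
Local Open Scope quotient_scope.

Section Tensor.
Variables (R : comPzRingType) (U V : lmodType R).

Definition bilinear_map (W : lmodType R) (f : U -> V -> W) : Prop :=
  (forall (a : R) u u' v, f (a *: u + u') v = a *: f u v + f u' v) /\
  (forall (a : R) u v v', f u (a *: v + v') = a *: f u v + f u v').

Definition tpre := seq (U * V).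
Definition tsum (W : zmodType) (f : U -> V -> W) (s : tpre) : W :=
  \sum_(p <- s) f p.1 p.2.

Definition tequiv (s t : tpre) : bool :=
  `[< forall (W : lmodType R) (f : U -> V -> W), bilinear_map f ->
        tsum f s = tsum f t >].

Lemma tequiv_refl : reflexive tequiv.
Proof. by move=> s; apply/asboolP. Qed.
Lemma tequiv_sym : symmetric tequiv.
Proof.
by move=> s t; apply/asboolP/asboolP => H W f bf; rewrite H.
Qed.
Lemma tequiv_trans : transitive tequiv.
Proof.
move=> t s u /asboolP H1 /asboolP H2; apply/asboolP => W f bf.
by rewrite H1 // H2.
Qed.

Definition tequiv_rel := EquivRel tequiv tequiv_refl tequiv_sym tequiv_trans.
Definition tensor := {eq_quot tequiv_rel}.
HB.instance Definition _ := Choice.on tensor.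
HB.instance Definition _ := EqQuotient.on tensor.

Definition tlift (W : zmodType) (f : U -> V -> W) (x : tensor) : W :=
  tsum f (repr x).
Definition tmul (u : U) (v : V) : tensor := \pi_tensor [:: (u, v)].

Definition tzero : tensor := \pi_tensor [::].
Definition tadd (x y : tensor) : tensor := \pi_tensor (repr x ++ repr y).
Definition topp (x : tensor) : tensor :=
  \pi_tensor (map (fun p => (- p.1, p.2)) (repr x)).
Definition tscale (a : R) (x : tensor) : tensor :=
  \pi_tensor (map (fun p => (a *: p.1, p.2)) (repr x)).

Lemma tsum_pi (W : lmodType R) (f : U -> V -> W) s :
  bilinear_map f -> tsum f (repr (\pi_tensor s)) = tsum f s.
Proof.
move=> bf; have : tequiv_rel (repr (\pi_tensor s)) s.
  by apply/eqmodP; rewrite reprK.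
by move/asboolP; apply.
Qed.

Lemma tensor_ext (x y : tensor) :
  (forall (W : lmodType R) (f : U -> V -> W), bilinear_map f ->
     tlift f x = tlift f y) -> x = y.
Proof.
by move=> H; rewrite -[x]reprK -[y]reprK; apply/eqmodP; apply/asboolP.
Qed.

Section BilinFacts.
Variables (W : lmodType R) (f : U -> V -> W).
Hypothesis bf : bilinear_map f.
Lemma bil0l v : f 0 v = 0.
Proof.
case: bf => H _; have := H 1 0 0 v; rewrite scale1r addr0 scale1r => E.
by apply: (addrI (f 0 v)); rewrite addr0 -E.
Qed.
Lemma bilZl a u v : f (a *: u) v = a *: f u v.
Proof. by case: bf => H _; rewrite -[a *: u]addr0 H bil0l addr0. Qed.
Lemma bilNl u v : f (- u) v = - f u v.
Proof. by rewrite -scaleN1r bilZl scaleN1r. Qed.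
End BilinFacts.

Lemma tliftD (W : lmodType R) (f : U -> V -> W) x y : bilinear_map f ->
  tlift f (tadd x y) = tlift f x + tlift f y.
Proof. by move=> bf; rewrite /tlift /tadd tsum_pi // /tsum big_cat. Qed.
Lemma tlift0 (W : lmodType R) (f : U -> V -> W) : bilinear_map f ->
  tlift f tzero = 0.
Proof. by move=> bf; rewrite /tlift /tzero tsum_pi // /tsum big_nil. Qed.
Lemma tliftN (W : lmodType R) (f : U -> V -> W) x : bilinear_map f ->
  tlift f (topp x) = - tlift f x.
Proof.
move=> bf; rewrite /tlift /topp tsum_pi // /tsum big_map -sumrN.
by apply: eq_bigr => p _ /=; rewrite bilNl.
Qed.
Lemma tliftZ (W : lmodType R) (f : U -> V -> W) a x : bilinear_map f ->
  tlift f (tscale a x) = a *: tlift f x.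
Proof.
move=> bf; rewrite /tlift /tscale tsum_pi // /tsum big_map scaler_sumr.
by apply: eq_bigr => p _ /=; rewrite bilZl.
Qed.

Lemma taddA : associative tadd.
Proof. by move=> x y z; apply: tensor_ext => W f bf; rewrite !tliftD // addrA. Qed.
Lemma taddC : commutative tadd.
Proof. by move=> x y; apply: tensor_ext => W f bf; rewrite !tliftD // addrC. Qed.
Lemma tadd0 : left_id tzero tadd.
Proof. by move=> x; apply: tensor_ext => W f bf; rewrite !tliftD // tlift0 // add0r. Qed.
Lemma taddN : left_inverse tzero topp tadd.
Proof.
by move=> x; apply: tensor_ext => W f bf; rewrite tliftD // tliftN // tlift0 // addNr.
Qed.

HB.instance Definition _ := GRing.isZmodule.Build tensor taddA taddC tadd0 taddN.

Lemma tscaleA a b x : tscale a (tscale b x) = tscale (a * b) x.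
Proof. by apply: tensor_ext => W f bf; rewrite !tliftZ // scalerA. Qed.
Lemma tscale1 : left_id 1 tscale.
Proof. by move=> x; apply: tensor_ext => W f bf; rewrite !tliftZ // scale1r. Qed.
Lemma tscaleDr : right_distributive tscale +%R.
Proof.
by move=> a x y; apply: tensor_ext => W f bf; rewrite /= tliftZ // !tliftD // !tliftZ // scalerDr.
Qed.
Lemma tscaleDl x : {morph tscale^~ x : a b / a + b}.
Proof.
by move=> a b; apply: tensor_ext => W f bf; rewrite /= tliftD // !tliftZ // scalerDl.
Qed.

HB.instance Definition _ := GRing.Zmodule_isLmodule.Build R tensor
  tscaleA tscale1 tscaleDr tscaleDl.

End Tensor.
Arguments tmul {R U V}.
Arguments tlift {R U V W}.

Notation "u \ot v" := (tmul u v) (at level 41, right associativity).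

(* Hopf-algebraic notions (Sweedler sums are written with tlift:       *)
(*   tlift f x = sum f x_i y_i  for  x = sum x_i \ot y_i)             *)
Section DoiHopf.
Variable k : comPzRingType.

Definition klinear (U V : lmodType k) (f : U -> V) : Prop :=
  forall (a : k) x y, f (a *: x + y) = a *: f x + f y.
Definition kform (U : lmodType k) (f : U -> k) : Prop :=
  forall (a : k) x y, f (a *: x + y) = a * f x + f y.

Definition tmap (U V U' V' : lmodType k) (f : U -> U') (g : V -> V')
  (x : tensor U V) : tensor U' V' := tlift (fun u v => f u \ot g v) x.

(* coalgebras: coassociativity (up to the canonical associator, we use
   right-nested tensors C (x) (C (x) C)) and counit *)
Definition is_coalgebra (C : lmodType k) (D : C -> tensor C C) (e : C -> k) :=
  [/\ klinear D, kform e,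
      forall c, tlift (fun c1 c2 => tlift (fun d1 d2 => d1 \ot (d2 \ot c2)) (D c1)) (D c)
              = tlift (fun c1 c2 => c1 \ot D c2) (D c),
      forall c, tlift (fun c1 c2 => e c1 *: c2) (D c) = c &
      forall c, tlift (fun c1 c2 => e c2 *: c1) (D c) = c].

Definition talgmul (P Q : algType k) (x y : tensor P Q) : tensor P Q :=
  tlift (fun a b => tlift (fun a' b' => (a * a') \ot (b * b')) y) x.

Definition is_bialgebra (H : algType k) (D : H -> tensor H H) (e : H -> k) :=
  [/\ is_coalgebra D e,
      forall g h, D (g * h) = talgmul (D g) (D h),
      D 1 = 1 \ot 1,
      forall g h, e (g * h) = e g * e h &
      e 1 = 1].

Definition is_antipode (H : algType k) (D : H -> tensor H H) (e : H -> k)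
  (S : H -> H) :=
  klinear S /\
  forall h, tlift (fun a b => S a * b) (D h) = (e h)%:A /\
            tlift (fun a b => a * S b) (D h) = (e h)%:A.

Definition is_hopf (H : algType k) (D : H -> tensor H H) (e : H -> k) :=
  is_bialgebra D e /\ exists S, is_antipode D e S.

Definition is_left_comodule (C : lmodType k) (D : C -> tensor C C) (e : C -> k)
  (M : lmodType k) (rho : M -> tensor C M) :=
  [/\ klinear rho,
      forall m, tlift (fun c n => tlift (fun c1 c2 => c1 \ot (c2 \ot n)) (D c)) (rho m)
              = tlift (fun c n => c \ot rho n) (rho m) &
      forall m, tlift (fun c n => e c *: n) (rho m) = m].

Definition is_right_module (A : algType k) (M : lmodType k) (act : M -> A -> M) :=
  [/\ forall (t : k) m m' a, act (t *: m + m') a = t *: act m a + act m' a,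
      forall (t : k) m a b, act m (t *: a + b) = t *: act m a + act m b,
      forall m a b, act m (a * b) = act (act m a) b &
      forall m, act m 1 = m].

Definition is_comodule_algebra (H : algType k) (DH : H -> tensor H H) (eH : H -> k)
  (A : algType k) (rhoA : A -> tensor H A) :=
  [/\ is_left_comodule DH eH rhoA,
      forall a b, rhoA (a * b) = talgmul (rhoA a) (rhoA b) &
      rhoA 1 = 1 \ot 1].

Definition is_module_coalgebra (H : algType k) (DH : H -> tensor H H) (eH : H -> k)
  (C : lmodType k) (DC : C -> tensor C C) (eC : C -> k) (actC : C -> H -> C) :=
  [/\ is_coalgebra DC eC,
      is_right_module actC,
      forall c h, DC (actC c h)
        = tlift (fun c1 c2 => tlift (fun h1 h2 => actC c1 h1 \ot actC c2 h2) (DH h)) (DC c) &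
      forall c h, eC (actC c h) = eC c * eH h].

Definition flat (C : lmodType k) : Prop :=
  forall (M N : lmodType k) (f : M -> N), klinear f -> injective f ->
    injective (tmap (@id C) f).

Section Datum.
Variables (H : algType k) (DH : H -> tensor H H) (eH : H -> k)
          (A : algType k) (rhoA : A -> tensor H A)
          (C : lmodType k) (DC : C -> tensor C C) (eC : C -> k)
          (actC : C -> H -> C).

Definition DoiHopf_datum :=
  [/\ is_bialgebra DH eH, is_comodule_algebra DH eH rhoA,
      is_module_coalgebra DH eH DC eC actC & flat C].

Definition is_DH_module (M : lmodType k) (act : M -> A -> M) (coact : M -> tensor C M) :=
  [/\ is_right_module act,
      is_left_comodule DC eC coact &
      forall m a, coact (act m a)
        = tlift (fun c n => tlift (fun h b => actC c h \ot act n b) (rhoA a)) (coact m)].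

Definition is_DH_morphism (M : lmodType k) (actM : M -> A -> M) (coactM : M -> tensor C M)
  (N : lmodType k) (actN : N -> A -> N) (coactN : N -> tensor C N) (f : M -> N) :=
  [/\ klinear f,
      forall m a, f (actM m a) = actN (f m) a &
      forall m, coactN (f m) = tmap id f (coactM m)].

(* the right adjoint G : M_A -> C, G(N) = C (x) N *)
Definition Gact (N : lmodType k) (actN : N -> A -> N) (x : tensor C N) (a : A) :
  tensor C N :=
  tlift (fun c n => tlift (fun h b => actC c h \ot actN n b) (rhoA a)) x.
Definition Gcoact (N : lmodType k) (x : tensor C N) : tensor C (tensor C N) :=
  tlift (fun c n => tlift (fun c1 c2 => c1 \ot (c2 \ot n)) (DC c)) x.

(* a family nu_M : GF(M) = C (x) M -> M, indexed by (raw) structures; only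
   its values on Doi-Hopf modules are constrained *)
Definition GF_family :=
  forall (M : lmodType k), (M -> A -> M) -> (M -> tensor C M) -> tensor C M -> M.

Definition is_natural (nu : GF_family) : Prop :=
  (forall (M : lmodType k) (actM : M -> A -> M) (coactM : M -> tensor C M),
     is_DH_module actM coactM ->
     is_DH_morphism (Gact actM) (@Gcoact M) actM coactM (nu M actM coactM)) /\
  (forall (M : lmodType k) (actM : M -> A -> M) (coactM : M -> tensor C M)
          (N : lmodType k) (actN : N -> A -> N) (coactN : N -> tensor C N) (f : M -> N),
     is_DH_module actM coactM -> is_DH_module actN coactN ->
     is_DH_morphism actM coactM actN coactN f ->
     forall x, nu N actN coactN (tmap id f x) = f (nu M actM coactM x)).

(* the Doi-Hopf module C (x) A = G(A_A) *)
Definition actA (a b : A) : A := a * b.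
Definition nuCA (nu : GF_family) : tensor C (tensor C A) -> tensor C A :=
  nu (tensor C A) (Gact actA) (@Gcoact A).

End Datum.
End DoiHopf.

From HB Require Import structures.
From mathcomp Require Import all_boot all_algebra.
Import GRing.Theory.
Local Open Scope ring_scope.
Set Implicit Arguments. Unset Strict Implicit. Unset Printing Implicit Defensive.

(* The coaction rho_M : M -> C (x) M is itself a morphism M -> GF(M) in the
   category of Doi-Hopf modules, so naturality and the counit give
     nu_M (c (x) m) = (eps (x) M) rho_M (nu_M (c (x) m))
                    = (eps (x) M) nu_{GF(M)} (c (x) rho_M m).
   For n in M, the map a |-> n a is A-linear A -> M, so its image
   C (x) A -> C (x) M, c (x) a |-> c (x) n a, under G is a morphism; it sends
   c (x) c' (x) 1 to c (x) c' (x) n, and naturality once more turns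
   nu_{GF(M)} (c (x) c' (x) n) into (C (x) n.-) nu_{C (x) A} (c (x) c' (x) 1). *)

Section TensorCalculus.
Variable k : comPzRingType.
Implicit Types U V W X : lmodType k.

Lemma klinear0 U V (f : U -> V) : klinear f -> f 0 = 0.
Proof.
move=> lf; have E := lf 1 0 0; rewrite !scale1r addr0 in E.
by apply: (addrI (f 0)); rewrite addr0 {3}E.
Qed.

Lemma klinearD U V (f : U -> V) x y : klinear f -> f (x + y) = f x + f y.
Proof. by move=> lf; have := lf 1 x y; rewrite !scale1r. Qed.

Lemma klinearZ U V (f : U -> V) a x : klinear f -> f (a *: x) = a *: f x.
Proof. by move=> lf; have := lf a x 0; rewrite (klinear0 lf) !addr0. Qed.

Lemma klinear_id U : klinear (@id U). Proof. by []. Qed.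

Lemma klinear_comp U V W (f : U -> V) (g : V -> W) :
  klinear f -> klinear g -> klinear (fun x => g (f x)).
Proof. by move=> lf lg a x y; rewrite lf lg. Qed.

Lemma bilinear_from_klinear U V W (f : U -> V -> W) :
  (forall v, klinear (f ^~ v)) -> (forall u, klinear (f u)) -> bilinear_map f.
Proof. by move=> fl fr; split=> *; [apply: fl | apply: fr]. Qed.

Lemma bilinear_klinearl U V W (f : U -> V -> W) v :
  bilinear_map f -> klinear (f ^~ v).
Proof. by case=> fl _ a x y; apply: fl. Qed.

Lemma bilinear_klinearr U V W (f : U -> V -> W) u :
  bilinear_map f -> klinear (f u).
Proof. by case=> _ fr a x y; apply: fr. Qed.

Lemma klinear_tliftE U V W W' (f : U -> V -> W) (L : W -> W') x :
  klinear L -> L (tlift f x) = tlift (fun u v => L (f u v)) x.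
Proof.
move=> lL; rewrite /tlift /tsum.
exact: (big_morph L (fun x y => klinearD x y lL) (klinear0 lL)).
Qed.

Lemma tlift_scaleD U V W (f g : U -> V -> W) a x :
  tlift (fun u v => a *: f u v + g u v) x = a *: tlift f x + tlift g x.
Proof. by rewrite /tlift /tsum big_split /= scaler_sumr. Qed.

Lemma eq_tlift U V W (f g : U -> V -> W) x :
  (forall u v, f u v = g u v) -> tlift f x = tlift g x.
Proof. by move=> efg; rewrite /tlift /tsum; apply: eq_bigr => p _; apply: efg. Qed.

Lemma exchange_tlift U V U' V' W (F : U -> V -> U' -> V' -> W) x y :
  tlift (fun u v => tlift (F u v) y) x
  = tlift (fun u' v' => tlift (fun u v => F u v u' v') x) y.
Proof. by rewrite /tlift /tsum; apply: exchange_big. Qed.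

Lemma tlift_tmul U V W (f : U -> V -> W) u v :
  bilinear_map f -> tlift f (u \ot v) = f u v.
Proof. by move=> bf; rewrite /tlift /tmul tsum_pi // /tsum big_cons big_nil addr0. Qed.

Lemma tlift_klinear U V W (f : U -> V -> W) : bilinear_map f -> klinear (tlift f).
Proof. by move=> bf a x y; rewrite tliftD // tliftZ. Qed.

Lemma tlift_tlift U V U' V' W (f : U' -> V' -> W) (g : U -> V -> tensor U' V') y :
  bilinear_map f -> tlift f (tlift g y) = tlift (fun u v => tlift f (g u v)) y.
Proof. by move=> bf; apply: klinear_tliftE; apply: tlift_klinear. Qed.

Lemma bilinear_tmul U V : bilinear_map (@tmul k U V).
Proof.
split=> a u u' v; apply: tensor_ext => W f bf; rewrite (tlift_klinear bf) !tlift_tmul //.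
  exact: (bilinear_klinearl _ bf).
exact: (bilinear_klinearr _ bf).
Qed.

Lemma klinear_tmull U V (v : V) : klinear (fun u : U => u \ot v).
Proof. exact: (bilinear_klinearl _ (@bilinear_tmul U V)). Qed.

Lemma klinear_tmulr U V (u : U) : klinear (fun v : V => u \ot v).
Proof. exact: (bilinear_klinearr _ (@bilinear_tmul U V)). Qed.

Lemma tlift_tmul_id U V (x : tensor U V) : tlift tmul x = x.
Proof.
apply: tensor_ext => W f bf; rewrite klinear_tliftE; last exact: tlift_klinear.
by apply: eq_tlift => u v; rewrite tlift_tmul.
Qed.

Lemma tensor_klinear_ext U V W (L1 L2 : tensor U V -> W) x :
  klinear L1 -> klinear L2 -> (forall u v, L1 (u \ot v) = L2 (u \ot v)) ->
  L1 x = L2 x.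
Proof.
move=> l1 l2 E; rewrite -[x]tlift_tmul_id !klinear_tliftE //; exact: eq_tlift.
Qed.

Lemma klinear_tlift_param X U V W (G : X -> U -> V -> W) y :
  (forall u v, klinear (fun x => G x u v)) -> klinear (fun x => tlift (G x) y).
Proof. by move=> lG a x x'; rewrite -tlift_scaleD; apply: eq_tlift => u v; apply: lG. Qed.

Lemma bilinear_tmul_map U V U' V' (f : U -> U') (g : V -> V') :
  klinear f -> klinear g -> bilinear_map (fun u v => f u \ot g v).
Proof.
move=> lf lg; apply: bilinear_from_klinear => [v|u].
  exact: (klinear_comp (g := fun z => z \ot g v) lf (klinear_tmull _)).
exact: (klinear_comp (g := fun z => f u \ot z) lg (klinear_tmulr _)).
Qed.

Lemma tmap_klinear U V U' V' (f : U -> U') (g : V -> V') :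
  klinear f -> klinear g -> klinear (tmap f g).
Proof. by move=> lf lg; apply: tlift_klinear; apply: bilinear_tmul_map. Qed.

Lemma tmap_tmul U V U' V' (f : U -> U') (g : V -> V') u v :
  klinear f -> klinear g -> tmap f g (u \ot v) = f u \ot g v.
Proof. by move=> lf lg; rewrite /tmap tlift_tmul //; apply: bilinear_tmul_map. Qed.

Lemma bilinear_scale_form U V (e : U -> k) :
  kform e -> bilinear_map (fun (u : U) (v : V) => e u *: v).
Proof.
move=> fe; apply: bilinear_from_klinear => [v|u] a x y.
  by rewrite fe scalerDl scalerA.
by rewrite scalerDr !scalerA mulrC.
Qed.

End TensorCalculus.

Section RightModule.
Variables (k : comPzRingType) (A : algType k) (M : lmodType k) (act : M -> A -> M).
Hypothesis modM : is_right_module act.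

Lemma act_klinearl a : klinear (act ^~ a).
Proof. by case: modM => E _ _ _ t x y; apply: E. Qed.

Lemma act_klinearr m : klinear (act m).
Proof. by case: modM => _ E _ _ t x y; apply: E. Qed.

Lemma act_mul m a b : act m (a * b) = act (act m a) b.
Proof. by case: modM. Qed.

Lemma act1 m : act m 1 = m.
Proof. by case: modM. Qed.

End RightModule.

Lemma actA_right_module (k : comPzRingType) (A : algType k) :
  is_right_module (@actA k A).
Proof.
rewrite /actA; split=> [t x y a | t x a b | x a b | x].
- by rewrite mulrDl scalerAl.
- by rewrite mulrDr scalerAr.
- by rewrite mulrA.
- by rewrite mulr1.
Qed.

Section DoiHopfDatum.
Variables (k : comPzRingType) (H : algType k) (DH : H -> tensor H H) (eH : H -> k)
  (A : algType k) (rhoA : A -> tensor H A)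
  (C : lmodType k) (DC : C -> tensor C C) (eC : C -> k) (actC : C -> H -> C).
Hypothesis datum : DoiHopf_datum DH eH rhoA DC eC actC.

Lemma rhoA_klinear : klinear rhoA. Proof. by case: datum => _ [[]]. Qed.

Lemma rhoA_coassoc a :
  tlift (fun h b => tlift (fun h1 h2 => h1 \ot (h2 \ot b)) (DH h)) (rhoA a)
  = tlift (fun h b => h \ot rhoA b) (rhoA a).
Proof. by case: datum => _ [[_ E _] _ _] _ _. Qed.

Lemma rhoA_mul a b : rhoA (a * b) = talgmul (rhoA a) (rhoA b).
Proof. by case: datum => _ [_ E _] _ _. Qed.

Lemma rhoA1 : rhoA 1 = 1 \ot 1.
Proof. by case: datum => _ [_ _ E] _ _. Qed.

Lemma DC_klinear : klinear DC. Proof. by case: datum => _ _ [[]]. Qed.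

Lemma eC_kform : kform eC. Proof. by case: datum => _ _ [[]]. Qed.

Lemma DC_coassoc c :
  tlift (fun c1 c2 => tlift (fun d1 d2 => d1 \ot (d2 \ot c2)) (DC c1)) (DC c)
  = tlift (fun c1 c2 => c1 \ot DC c2) (DC c).
Proof. by case: datum => _ _ [[_ _ E _ _] _ _ _] _. Qed.

Lemma DC_counitl c : tlift (fun c1 c2 => eC c1 *: c2) (DC c) = c.
Proof. by case: datum => _ _ [[_ _ _ E _] _ _ _] _. Qed.

Lemma actC_right_module : is_right_module actC.
Proof. by case: datum => _ _ []. Qed.

Lemma DC_actC c h : DC (actC c h)
  = tlift (fun c1 c2 => tlift (fun h1 h2 => actC c1 h1 \ot actC c2 h2) (DH h)) (DC c).
Proof. by case: datum => _ _ [_ _ E _] _. Qed.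

Notation G_act := (Gact rhoA actC).
Notation G_coact := (@Gcoact k C DC).

Section FreeModule.
Variables (N : lmodType k) (actN : N -> A -> N).
Hypothesis modN : is_right_module actN.

Lemma bilinear_actC_actN c n : bilinear_map (fun h b => actC c h \ot actN n b).
Proof.
exact: bilinear_tmul_map (act_klinearr actC_right_module c) (act_klinearr modN n).
Qed.

Lemma bilinear_Gact a :
  bilinear_map (fun c n => tlift (fun h b => actC c h \ot actN n b) (rhoA a)).
Proof.
apply: bilinear_from_klinear => [n|c]; apply: klinear_tlift_param => h b.
  exact: (klinear_comp (g := fun z => z \ot actN n b)
            (act_klinearl actC_right_module h) (klinear_tmull _)).
exact: (klinear_comp (g := fun z => actC c h \ot z) (act_klinearl modN b) (klinear_tmulr _)).
Qed.

Lemma Gact_klinear a : klinear (fun x => G_act actN x a).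
Proof. exact: tlift_klinear (bilinear_Gact a). Qed.

Lemma Gact_tmul c n a :
  G_act actN (c \ot n) a = tlift (fun h b => actC c h \ot actN n b) (rhoA a).
Proof. exact: tlift_tmul (bilinear_Gact a). Qed.

Lemma Gact_tlift (U V : lmodType k) (f : U -> V -> tensor C N) y a :
  G_act actN (tlift f y) a = tlift (fun u v => G_act actN (f u v) a) y.
Proof. exact: klinear_tliftE (Gact_klinear a). Qed.

Lemma Gact_right_module : is_right_module (G_act actN).
Proof.
split=> [t x y a | t x a b | x a b | x].
- exact: Gact_klinear.
- rewrite /Gact -tlift_scaleD; apply: eq_tlift => c n.
  by rewrite rhoA_klinear; apply: tlift_klinear; apply: bilinear_actC_actN.
- apply: (tensor_klinear_ext (L1 := fun x => G_act actN x (a * b))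
                             (L2 := fun x => G_act actN (G_act actN x a) b)).
  + exact: Gact_klinear.
  + exact: klinear_comp (Gact_klinear a) (Gact_klinear b).
  move=> c n /=; rewrite [G_act _ (c \ot n) a]Gact_tmul Gact_tlift Gact_tmul rhoA_mul /talgmul tlift_tlift; last exact: bilinear_actC_actN.
  apply: eq_tlift => h a'; rewrite Gact_tmul tlift_tlift; last exact: bilinear_actC_actN.
  apply: eq_tlift => h' b'; rewrite tlift_tmul; last exact: bilinear_actC_actN.
  by rewrite (act_mul actC_right_module) (act_mul modN).
- apply: (tensor_klinear_ext (L1 := fun x => G_act actN x 1) (L2 := id)).
  + exact: Gact_klinear.
  + exact: klinear_id.
  move=> c n /=; rewrite Gact_tmul rhoA1 tlift_tmul; last exact: bilinear_actC_actN.
  by rewrite (act1 actC_right_module) (act1 modN).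
Qed.

End FreeModule.

Lemma bilinear_Gcoact (N : lmodType k) :
  bilinear_map (fun (c : C) (n : N) => tlift (fun c1 c2 => c1 \ot (c2 \ot n)) (DC c)).
Proof.
apply: bilinear_from_klinear => [n|c].
  exact: (klinear_comp DC_klinear
            (tlift_klinear (bilinear_tmul_map (@klinear_id _ C) (klinear_tmull n)))).
apply: klinear_tlift_param => c1 c2.
exact: (klinear_comp (klinear_tmulr c2) (klinear_tmulr c1)).
Qed.

Lemma Gcoact_klinear (N : lmodType k) : klinear (@G_coact N).
Proof. exact: tlift_klinear (bilinear_Gcoact N). Qed.

Lemma Gcoact_tmul (N : lmodType k) c (n : N) :
  G_coact (c \ot n) = tlift (fun c1 c2 => c1 \ot (c2 \ot n)) (DC c).
Proof. exact: tlift_tmul (bilinear_Gcoact N). Qed.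

Lemma Gcoact_tlift (U V N : lmodType k) (f : U -> V -> tensor C N) y :
  G_coact (tlift f y) = tlift (fun u v => G_coact (f u v)) y.
Proof. exact: klinear_tliftE (@Gcoact_klinear N). Qed.

Lemma Gcoact_coassoc (N : lmodType k) (x : tensor C N) :
  G_coact (G_coact x) = tlift (fun c y => c \ot G_coact y) (G_coact x).
Proof.
have bCG : bilinear_map (fun (c : C) (y : tensor C N) => c \ot G_coact y).
  exact: bilinear_tmul_map (@klinear_id _ C) (@Gcoact_klinear N).
apply: (tensor_klinear_ext (L1 := fun x => G_coact (G_coact x))
                           (L2 := fun x => tlift (fun c y => c \ot G_coact y) (G_coact x))).
- exact: klinear_comp (@Gcoact_klinear N) (@Gcoact_klinear _).
- exact: klinear_comp (@Gcoact_klinear N) (tlift_klinear bCG).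
move=> c n; set T := tmap (@id C) (tmap (@id C) (fun z : C => z \ot n)).
have lT : klinear T.
  by apply: tmap_klinear => //; apply: tmap_klinear => //; apply: klinear_tmull.
have T_tmul c1 c2 c3 : T (c1 \ot (c2 \ot c3)) = c1 \ot (c2 \ot (c3 \ot n)).
  by rewrite /T !tmap_tmul //; [apply: klinear_tmull | apply: tmap_klinear => //;
    apply: klinear_tmull].
transitivity (T (tlift (fun c1 c2 => tlift (fun d1 d2 => d1 \ot (d2 \ot c2)) (DC c1)) (DC c))).
  rewrite Gcoact_tmul Gcoact_tlift (klinear_tliftE _ _ lT); apply: eq_tlift => u v.
  rewrite Gcoact_tmul (klinear_tliftE _ _ lT); apply: eq_tlift => d1 d2.
  by rewrite T_tmul.
rewrite DC_coassoc (klinear_tliftE _ _ lT) Gcoact_tmul tlift_tlift //.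
apply: eq_tlift => u v; rewrite tlift_tmul // /T tmap_tmul //; last first.
  by apply: tmap_klinear => //; apply: klinear_tmull.
by rewrite Gcoact_tmul.
Qed.

Lemma Gcoact_counit (N : lmodType k) (x : tensor C N) :
  tlift (fun c y => eC c *: y) (G_coact x) = x.
Proof.
have bE := bilinear_scale_form (tensor C N) eC_kform.
apply: (tensor_klinear_ext (L1 := fun x => tlift (fun c y => eC c *: y) (G_coact x))
                           (L2 := id)) => //.
  exact: klinear_comp (@Gcoact_klinear N) (tlift_klinear bE).
move=> c n /=; rewrite Gcoact_tmul tlift_tlift //.
transitivity (tlift (fun c1 c2 => eC c1 *: c2) (DC c) \ot n); last by rewrite DC_counitl.
rewrite (klinear_tliftE _ _ (klinear_tmull n)); apply: eq_tlift => u v.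
by rewrite tlift_tmul // (klinearZ _ _ (klinear_tmull n)).
Qed.

Lemma Gcoact_left_comodule (N : lmodType k) : is_left_comodule DC eC (@G_coact N).
Proof.
split; [exact: Gcoact_klinear | | exact: Gcoact_counit].
exact: Gcoact_coassoc.
Qed.

Lemma Gcoact_Gact (N : lmodType k) (actN : N -> A -> N) x a :
  is_right_module actN ->
  G_coact (G_act actN x a)
  = tlift (fun c y => tlift (fun h b => actC c h \ot G_act actN y b) (rhoA a)) (G_coact x).
Proof.
move=> modN; have lCl h := act_klinearl actC_right_module h.
have lCr c := act_klinearr actC_right_module c.
have bF : bilinear_map (fun (c : C) (y : tensor C N) =>
    tlift (fun h b => actC c h \ot G_act actN y b) (rhoA a)).
  apply: bilinear_from_klinear => [y|c]; apply: klinear_tlift_param => h b.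
    exact: (klinear_comp (g := fun z => z \ot _) (lCl h) (klinear_tmull _)).
  exact: (klinear_comp (g := fun z => actC c h \ot z) (Gact_klinear modN b)
            (klinear_tmulr _)).
have bCT (U : lmodType k) (u : U) : bilinear_map (fun (c1 : C) (c2 : C) => c1 \ot (c2 \ot u)).
  exact: bilinear_tmul_map (@klinear_id _ C) (klinear_tmull u).
apply: (tensor_klinear_ext (L1 := fun x => G_coact (G_act actN x a))
          (L2 := fun x => tlift (fun (c : C) (y : tensor C N) =>
                   tlift (fun h b => actC c h \ot G_act actN y b) (rhoA a)) (G_coact x))).
- exact: klinear_comp (Gact_klinear modN a) (@Gcoact_klinear N).
- exact: klinear_comp (@Gcoact_klinear N) (tlift_klinear bF).
move=> c n /=.
transitivity (tlift (fun c1 c2 => tlift (fun h b => tlift (fun h1 h2 =>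
   actC c1 h1 \ot (actC c2 h2 \ot actN n b)) (DH h)) (rhoA a)) (DC c)).
  rewrite exchange_tlift Gact_tmul // Gcoact_tlift; apply: eq_tlift => h b.
  rewrite Gcoact_tmul DC_actC tlift_tlift //; apply: eq_tlift => c1 c2.
  rewrite tlift_tlift //; apply: eq_tlift => h1 h2.
  by rewrite tlift_tmul.
apply: esym; rewrite Gcoact_tmul tlift_tlift //; apply: eq_tlift => c1 c2.
rewrite tlift_tmul //.
have bT : bilinear_map (fun (h : H) (y : tensor H A) =>
    actC c1 h \ot tlift (fun h' b' => actC c2 h' \ot actN n b') y).
  apply: bilinear_tmul_map => //; apply: tlift_klinear.
  exact: bilinear_actC_actN.
transitivity (tlift (fun (h : H) (y : tensor H A) =>
    actC c1 h \ot tlift (fun h' b' => actC c2 h' \ot actN n b') y)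
    (tlift (fun h b => h \ot rhoA b) (rhoA a))).
  rewrite tlift_tlift //; apply: eq_tlift => h b.
  by rewrite tlift_tmul // Gact_tmul.
rewrite -rhoA_coassoc tlift_tlift //; apply: eq_tlift => h b.
rewrite tlift_tlift //; apply: eq_tlift => h1 h2.
by rewrite !tlift_tmul //; exact: bilinear_actC_actN.
Qed.

Lemma G_DH_module (N : lmodType k) (actN : N -> A -> N) :
  is_right_module actN -> is_DH_module rhoA DC eC actC (G_act actN) (@G_coact N).
Proof.
move=> modN; split; [exact: Gact_right_module | exact: Gcoact_left_comodule |].
by move=> x a; apply: Gcoact_Gact.
Qed.

Lemma G_DH_morphism (N N' : lmodType k) (actN : N -> A -> N) (actN' : N' -> A -> N')
    (f : N -> N') :
  is_right_module actN -> is_right_module actN' ->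
  klinear f -> (forall n a, f (actN n a) = actN' (f n) a) ->
  is_DH_morphism (G_act actN) (@G_coact N) (G_act actN') (@G_coact N') (tmap id f).
Proof.
move=> modN modN' lf f_act; have lG := tmap_klinear (@klinear_id _ C) lf.
split=> [// | x a | x].
- apply: (tensor_klinear_ext (L1 := fun x => tmap id f (G_act actN x a))
                             (L2 := fun x => G_act actN' (tmap id f x) a)).
  + exact: klinear_comp (Gact_klinear modN a) lG.
  + exact: klinear_comp lG (Gact_klinear modN' a).
  move=> c n /=; rewrite Gact_tmul // tmap_tmul // Gact_tmul // (klinear_tliftE _ _ lG).
  by apply: eq_tlift => h b; rewrite tmap_tmul // f_act.
- have lGG := tmap_klinear (@klinear_id _ C) lG.
  apply: (tensor_klinear_ext (L1 := fun x => G_coact (tmap id f x))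
                             (L2 := fun x => tmap id (tmap id f) (G_coact x))).
  + exact: klinear_comp lG (@Gcoact_klinear N').
  + exact: klinear_comp (@Gcoact_klinear N) lGG.
  move=> c n /=; rewrite tmap_tmul // !Gcoact_tmul (klinear_tliftE _ _ lGG).
  by apply: eq_tlift => d1 d2; rewrite !tmap_tmul.
Qed.

Lemma coact_DH_morphism (M : lmodType k) (actM : M -> A -> M) (coactM : M -> tensor C M) :
  is_DH_module rhoA DC eC actC actM coactM ->
  is_DH_morphism actM coactM (G_act actM) (@G_coact M) coactM.
Proof. by case=> _ [? ? _] ?; split. Qed.

Lemma nu_klinear (nu : GF_family A C) (M : lmodType k) (actM : M -> A -> M) (coactM : M -> tensor C M) :
  is_natural rhoA DC eC actC nu -> is_DH_module rhoA DC eC actC actM coactM ->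
  klinear (nu M actM coactM).
Proof. by move=> nu_nat hM; case: (nu_nat.1 _ _ _ hM). Qed.

Lemma nu_tmul_expansion (nu : GF_family A C) (M : lmodType k) (actM : M -> A -> M) (coactM : M -> tensor C M)
    (m : M) (c : C) :
  is_natural rhoA DC eC actC nu -> is_DH_module rhoA DC eC actC actM coactM ->
  nu M actM coactM (c \ot m)
  = tlift (fun (c' : C) (n : M) =>
             actM n (tlift (fun (d : C) (a : A) => eC d *: a)
                       (nuCA rhoA DC actC nu (c \ot (c' \ot 1)))))
          (coactM m).
Proof.
move=> nu_nat hM; have [modM [lco _ counitM] _] := hM.
have hGM := G_DH_module modM.
have bE := bilinear_scale_form M eC_kform.
have nu_coact := nu_nat.2 _ _ _ _ _ _ _ hM hGM (coact_DH_morphism hM) (c \ot m).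
rewrite -[LHS]counitM -nu_coact tmap_tmul // -{1}[coactM m]tlift_tmul_id.
rewrite (klinear_tliftE _ _ (klinear_tmulr c)) (klinear_tliftE _ _ (nu_klinear nu_nat hGM)).
rewrite tlift_tlift //; apply: eq_tlift => c' n.
have lactn := act_klinearr modM n.
have lG := tmap_klinear (@klinear_id _ C) lactn.
have nu_actn := nu_nat.2 _ _ _ _ _ _ _ (G_DH_module (actA_right_module A)) hGM
  (G_DH_morphism (actA_right_module A) modM lactn (act_mul modM n)) (c \ot (c' \ot 1)).
rewrite !tmap_tmul // (act1 modM) in nu_actn.
rewrite nu_actn /nuCA /tmap tlift_tlift // (klinear_tliftE _ _ lactn).
by apply: eq_tlift => d a; rewrite tlift_tmul // (klinearZ _ _ lactn).
Qed.

Lemma nu_eq_of_nuCA (nu nu' : GF_family A C) :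
  is_natural rhoA DC eC actC nu -> is_natural rhoA DC eC actC nu' ->
  (forall x, nuCA rhoA DC actC nu' x = nuCA rhoA DC actC nu x) ->
  forall (M : lmodType k) (actM : M -> A -> M) (coactM : M -> tensor C M),
    is_DH_module rhoA DC eC actC actM coactM ->
    forall x, nu' M actM coactM x = nu M actM coactM x.
Proof.
move=> nat nat' agree M actM coactM hM x.
apply: tensor_klinear_ext; [exact: nu_klinear | exact: nu_klinear |] => c m.
rewrite !nu_tmul_expansion //.
by apply: eq_tlift => c' n; rewrite agree.
Qed.

End DoiHopfDatum.

Theorem lemma2p1p2 (k : comPzRingType)
  (H : algType k) (DH : H -> tensor H H) (eH : H -> k)
  (A : algType k) (rhoA : A -> tensor H A)
  (C : lmodType k) (DC : C -> tensor C C) (eC : C -> k) (actC : C -> H -> C)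
  (datum : DoiHopf_datum DH eH rhoA DC eC actC)
  (hopfH : is_hopf DH eH)
  (nu : GF_family A C)
  (nu_nat : is_natural rhoA DC eC actC nu) :
  (forall (M : lmodType k) (actM : M -> A -> M) (coactM : M -> tensor C M),
     is_DH_module rhoA DC eC actC actM coactM ->
     forall (m : M) (c : C),
       nu M actM coactM (c \ot m)
       = tlift (fun (c' : C) (n : M) =>
                  actM n (tlift (fun (d : C) (a : A) => eC d *: a)
                            (nuCA rhoA DC actC nu (c \ot (c' \ot 1)))))
               (coactM m)) /\
  (forall nu' : GF_family A C, is_natural rhoA DC eC actC nu' ->
     (forall x, nuCA rhoA DC actC nu' x = nuCA rhoA DC actC nu x) ->
     forall (M : lmodType k) (actM : M -> A -> M) (coactM : M -> tensor C M),
       is_DH_module rhoA DC eC actC actM coactM ->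
       forall x, nu' M actM coactM x = nu M actM coactM x).
Proof.
split=> [M actM coactM hM m c | nu' nat'].
  exact: (nu_tmul_expansion datum).
exact: (nu_eq_of_nuCA datum).
Qed.
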